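(* Let $(\beta_{\rm sd},\beta_{\rm rd},\beta_{\rm sr})\in\mathbb{R}_+^3$ with $\beta_{\rm rd},\beta_{\rm sr}>0$ (or more generally $C,I>0$), and set $S=\mathsf{SNR}^{\beta_{\rm sd}}$, $I=\mathsf{SNR}^{\beta_{\rm rd}}$, $C=\mathsf{SNR}^{\beta_{\rm sr}}$. Then the NNC rate with deterministic switch $r^{\rm(NNC,det)}$ satisfies $$\liminf_{\mathsf{SNR}\to\infty}\frac{r^{\rm(NNC,det)}}{\log(1+\mathsf{SNR})}\ge\beta_{\rm sd}+\frac{[\beta_{\rm rd}-\beta_{\rm sd}]^+[\beta_{\rm sr}-\beta_{\rm sd}]^+}{[\beta_{\rm rd}-\beta_{\rm sd}]^++[\beta_{\rm sr}-\beta_{\rm sd}]^+}$$ (fraction read as $0$ when its denominator vanishes), i.e. NNC with deterministic switch achieves the gDoF of the G-HD-RC.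
   Context: $r^{\rm(NNC,det)}:=\sup_{\gamma\in(0,1),\beta\in[0,1],\sigma_0^2>0}\min\{\gamma I_9+(1-\gamma)I_{10},\gamma I_{11}+(1-\gamma)I_{12}\}$ with $P_{s,0}=\beta/\gamma$, $P_{s,1}=(1-\beta)/(1-\gamma)$, $P_{r,1}=1/(1-\gamma)$, $I_9=\log(1+SP_{s,0})-\log(1+1/\sigma_0^2)$, $I_{10}=\log(1+SP_{s,1}+IP_{r,1})$, $I_{11}=\log(1+SP_{s,0}+\frac{C}{1+\sigma_0^2}P_{s,0})$, $I_{12}=\log(1+SP_{s,1})$; it is an achievable rate for the Gaussian half-duplex relay channel $Y_r=\sqrt{C}X_s(1-S_r)+Z_r$, $Y_d=\sqrt S X_s+e^{j\theta}\sqrt I X_rS_r+Z_d$ (unit power constraints, unit-variance independent complex Gaussian noises, relay state $S_r\in\{0,1\}$). $[x]^+=\max\{x,0\}$; logs base 2. *)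

From Stdlib Require Import Reals Lra.
Open Scope R_scope.

Definition log2 (x : R) : R := ln x / ln 2.

Definition pos_part (x : R) : R := Rmax x 0.

Definition frac0 (a b : R) : R := if Req_EM_T b 0 then 0 else a / b.

Definition gainS (SNR bsd : R) : R := Rpower SNR bsd.
Definition gainI (SNR brd : R) : R := Rpower SNR brd.
Definition gainC (SNR bsr : R) : R := Rpower SNR bsr.

(* The objective min{gamma I9 + (1-gamma) I10, gamma I11 + (1-gamma) I12}
   of the NNC-with-deterministic-switch rate, for gains S, I, C and
   parameters gamma, beta, sigma0^2 (= s2). *)
Definition NNC_det_obj (S I C gamma beta s2 : R) : R :=
  let Ps0 := beta / gamma in
  let Ps1 := (1 - beta) / (1 - gamma) in
  let Pr1 := 1 / (1 - gamma) in
  let I9  := log2 (1 + S * Ps0) - log2 (1 + 1 / s2) in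
  let I10 := log2 (1 + S * Ps1 + I * Pr1) in
  let I11 := log2 (1 + S * Ps0 + C / (1 + s2) * Ps0) in
  let I12 := log2 (1 + S * Ps1) in
  Rmin (gamma * I9 + (1 - gamma) * I10) (gamma * I11 + (1 - gamma) * I12).

(* The set of values over which r^(NNC,det) is the supremum:
   r^(NNC,det)(S,I,C) = sup { NNC_det_obj S I C gamma beta s2 |
                              gamma in (0,1), beta in [0,1], s2 > 0 }. *)
Definition NNC_det_vals (S I C v : R) : Prop :=
  exists gamma beta s2 : R,
    0 < gamma < 1 /\ 0 <= beta <= 1 /\ 0 < s2 /\
    v = NNC_det_obj S I C gamma beta s2.

Definition gdof (bsd brd bsr : R) : R :=
  bsd + frac0 (pos_part (brd - bsd) * pos_part (bsr - bsd))
              (pos_part (brd - bsd) + pos_part (bsr - bsd)).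

(* liminf_{SNR -> oo} (sup V(SNR)) / log2(1+SNR) >= d, unfolded:
   for every eps > 0, for all sufficiently large SNR, the supremum of V(SNR)
   exceeds (d - eps) log2(1+SNR), i.e. some element of V(SNR) does. *)
Definition liminf_sup_ratio_ge (V : R -> R -> Prop) (d : R) : Prop :=
  forall eps : R, 0 < eps ->
    exists M : R, forall SNR : R, M < SNR ->
      exists v : R, V SNR v /\ v / log2 (1 + SNR) >= d - eps.

From Stdlib Require Import Reals.
From Stdlib Require Import Lra Psatz.
Open Scope R_scope.

(* Fix the relay-transmit fraction gamma = g, put beta = g
   (equal source power 1 in both relay states) and sigma0^2 = 1.  With
   l = log2 SNR, each mutual-information term is then bounded below by a
   linear function of l:  I9 >= bsd l - 1,  I10 >= max(bsd,brd) l,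
   I11 >= max(bsd,bsr) l - 1,  I12 >= bsd l.  Writing
   max(bsd,b) = bsd + [b - bsd]^+, both terms of the minimum exceed
   (bsd + f) l - 1 as soon as f <= (1-g)[brd-bsd]^+ and f <= g[bsr-bsd]^+,
   and the gDoF fraction f = ac/(a+c) satisfies both constraints for
   g = a/(a+c).  Finally, a rate exceeding d log2 SNR - 1 is eventually
   above (d - eps) log2(1+SNR), since log2(1+SNR) <= log2 SNR + 1 grows
   unboundedly. *)

Lemma ln2_pos : 0 < ln 2.
Proof. pose proof ln_lt_2; lra. Qed.

Lemma log2_le (a b : R) : 0 < a -> a <= b -> log2 a <= log2 b.
Proof.
  intros Ha Hab. unfold log2, Rdiv.
  apply Rmult_le_compat_r; [left; apply Rinv_0_lt_compat, ln2_pos|].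
  destruct Hab as [Hlt|Heq]; [left; apply ln_increasing; auto|subst; lra].
Qed.

Lemma log2_lt (a b : R) : 0 < a -> a < b -> log2 a < log2 b.
Proof.
  intros Ha Hab. unfold log2, Rdiv.
  apply Rmult_lt_compat_r; [apply Rinv_0_lt_compat, ln2_pos|].
  apply ln_increasing; auto.
Qed.

Lemma log2_pos (x : R) : 1 < x -> 0 < log2 x.
Proof.
  intros Hx. unfold log2. apply Rdiv_lt_0_compat; [|apply ln2_pos].
  rewrite <- ln_1. apply ln_increasing; lra.
Qed.

Lemma log2_Rpower (x b : R) : 0 < x -> log2 (Rpower x b) = b * log2 x.
Proof.
  intros Hx. unfold log2, Rpower. rewrite ln_exp. field.
  pose proof ln2_pos; lra.
Qed.

Lemma log2_double (y : R) : 0 < y -> log2 (2 * y) = 1 + log2 y.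
Proof.
  intros Hy. unfold log2. rewrite ln_mult by lra. field.
  pose proof ln2_pos; lra.
Qed.

Lemma log2_exp (K : R) : log2 (exp (K * ln 2)) = K.
Proof. unfold log2. rewrite ln_exp. field. pose proof ln2_pos; lra. Qed.

Lemma log2_ge_power (x b y : R) :
  0 < x -> Rpower x b <= y -> b * log2 x <= log2 y.
Proof.
  intros Hx Hy. rewrite <- log2_Rpower by exact Hx.
  apply log2_le; [unfold Rpower; apply exp_pos|exact Hy].
Qed.

Lemma Rmax_mult_le (b1 b2 l y : R) :
  b1 * l <= y -> b2 * l <= y -> Rmax b1 b2 * l <= y.
Proof. intros H1 H2. unfold Rmax. destruct (Rle_dec b1 b2); assumption. Qed.

Lemma Rmax_pos_part (a b : R) : Rmax a b = a + pos_part (b - a).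
Proof.
  unfold pos_part, Rmax.
  destruct (Rle_dec a b), (Rle_dec (b - a) 0); lra.
Qed.

Lemma pos_part_ge0 (x : R) : 0 <= pos_part x.
Proof. unfold pos_part. apply Rmax_r. Qed.

(* With beta = gamma and sigma0^2 = 1 the source uses unit power in both
   relay states and the quantization penalty log2(1 + 1/sigma0^2) is 1 bit. *)
Lemma NNC_det_obj_unit_power (S I C g : R) :
  0 < g < 1 ->
  NNC_det_obj S I C g g 1 =
  Rmin (g * (log2 (1 + S) - 1) + (1 - g) * log2 (1 + S + I / (1 - g)))
       (g * log2 (1 + S + C / 2) + (1 - g) * log2 (1 + S)).
Proof.
  intros Hg. unfold NNC_det_obj. cbv zeta.
  replace (g / g) with 1 by (field; lra).
  replace ((1 - g) / (1 - g)) with 1 by (field; lra).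
  replace (1 + 1 / 1) with 2 by field.
  replace (C / (1 + 1)) with (C / 2) by field.
  replace (log2 2) with 1 by (unfold log2; field; pose proof ln2_pos; lra).
  now rewrite !Rmult_1_r, Rmult_div_assoc, Rmult_1_r.
Qed.

Lemma NNC_det_obj_lower_bound (x bsd brd bsr g f : R) :
  1 < x -> 0 < g < 1 ->
  f <= (1 - g) * pos_part (brd - bsd) -> f <= g * pos_part (bsr - bsd) ->
  (bsd + f) * log2 x - 1 <=
  NNC_det_obj (gainS x bsd) (gainI x brd) (gainC x bsr) g g 1.
Proof.
  intros Hx Hg Hfa Hfc.
  rewrite NNC_det_obj_unit_power by exact Hg.
  unfold gainS, gainI, gainC.
  set (S := Rpower x bsd). set (I := Rpower x brd). set (C := Rpower x bsr).
  set (l := log2 x).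
  assert (Hl : 0 < l) by (apply log2_pos; exact Hx).
  assert (HS : 0 < S) by (unfold S, Rpower; apply exp_pos).
  assert (HI : 0 < I) by (unfold I, Rpower; apply exp_pos).
  assert (HC : 0 < C) by (unfold C, Rpower; apply exp_pos).
  assert (HIg : I <= I / (1 - g)).
  { apply Rmult_le_reg_r with (1 - g); [lra|].
    unfold Rdiv. rewrite Rmult_assoc, Rinv_l by lra. nra. }
  assert (I9 : bsd * l <= log2 (1 + S))
    by (apply log2_ge_power; unfold S; lra).
  assert (I10 : (bsd + pos_part (brd - bsd)) * l <= log2 (1 + S + I / (1 - g))).
  { rewrite <- Rmax_pos_part. apply Rmax_mult_le; apply log2_ge_power;
      unfold S, I in *; lra. }
  assert (I11 : (bsd + pos_part (bsr - bsd)) * l - 1 <= log2 (1 + S + C / 2)).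
  { assert (Hbsr : bsr * l <= 1 + log2 (1 + S + C / 2)).
    { rewrite <- log2_double by lra. apply log2_ge_power; unfold C in *; lra. }
    assert (Hbsd : bsd * l <= 1 + log2 (1 + S + C / 2)).
    { apply Rle_trans with (log2 (1 + S + C / 2)); [|lra].
      apply log2_ge_power; unfold S in *; lra. }
    pose proof (Rmax_mult_le _ _ _ _ Hbsd Hbsr) as Hmax.
    rewrite Rmax_pos_part in Hmax. lra. }
  assert (Hfla : f * l <= (1 - g) * pos_part (brd - bsd) * l)
    by (apply Rmult_le_compat_r; lra).
  assert (Hflc : f * l <= g * pos_part (bsr - bsd) * l)
    by (apply Rmult_le_compat_r; lra).
  apply Rmin_glb; nra.
Qed.

Lemma frac0_time_split (a c : R) : 0 <= a -> 0 <= c ->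
  exists g, 0 < g < 1 /\
    frac0 (a * c) (a + c) <= (1 - g) * a /\ frac0 (a * c) (a + c) <= g * c.
Proof.
  intros Ha Hc. unfold frac0.
  destruct (Rlt_dec 0 a) as [Ha'|Ha']; destruct (Rlt_dec 0 c) as [Hc'|Hc'];
    destruct (Req_EM_T (a + c) 0) as [E|E]; try lra.
  - exists (a / (a + c)). repeat split.
    + apply Rdiv_lt_0_compat; lra.
    + apply Rmult_lt_reg_r with (a + c); [lra|].
      unfold Rdiv. rewrite Rmult_assoc, Rinv_l by lra. lra.
    + right; field; lra.
    + right; field; lra.
  - exists (1 / 2). replace c with 0 by lra. unfold Rdiv. lra.
  - exists (1 / 2). replace a with 0 by lra. unfold Rdiv. lra.
  - exists (1 / 2). replace a with 0 by lra. unfold Rdiv. lra.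
Qed.

Lemma frac0_nonneg (a c : R) : 0 <= a -> 0 <= c -> 0 <= frac0 (a * c) (a + c).
Proof.
  intros Ha Hc. unfold frac0. destruct (Req_EM_T (a + c) 0); [lra|].
  apply Rmult_le_pos; [nra|left; apply Rinv_0_lt_compat; lra].
Qed.

Lemma gdof_nonneg (bsd brd bsr : R) : 0 <= bsd -> 0 <= gdof bsd brd bsr.
Proof.
  intros Hb. unfold gdof.
  pose proof (frac0_nonneg _ _ (pos_part_ge0 (brd - bsd)) (pos_part_ge0 (bsr - bsd))).
  lra.
Qed.

Lemma eventually_ratio_ge (d eps : R) : 0 <= d -> 0 < eps ->
  exists M, forall x, M < x ->
    1 < x /\ forall v, d * log2 x - 1 <= v -> v / log2 (1 + x) >= d - eps.
Proof.
  intros Hd Heps.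
  set (K := (d + 1) / eps).
  exists (Rmax 1 (exp (K * ln 2))). intros x Hx.
  pose proof (Rmax_l 1 (exp (K * ln 2))) as HM1.
  pose proof (Rmax_r 1 (exp (K * ln 2))) as HMK.
  split; [lra|]. intros v Hv.
  set (l := log2 x) in *. set (L := log2 (1 + x)).
  assert (HLK : K < L).
  { rewrite <- (log2_exp K). apply log2_lt; [apply exp_pos|lra]. }
  assert (HLl : L <= l + 1).
  { unfold L, l. replace (log2 x + 1) with (1 + log2 x) by ring.
    rewrite <- log2_double by lra. apply log2_le; lra. }
  assert (HK0 : 0 < K) by (unfold K; apply Rdiv_lt_0_compat; lra).
  assert (HeL : d + 1 <= eps * L).
  { replace (d + 1) with (eps * K) by (unfold K; field; lra).
    apply Rmult_le_compat_l; lra. }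
  assert (HdL : d * L <= d * (l + 1)) by (apply Rmult_le_compat_l; lra).
  apply Rle_ge, Rmult_le_reg_r with L; [lra|].
  unfold Rdiv. rewrite Rmult_assoc, Rinv_l by lra. lra.
Qed.

Theorem proposition13 (bsd brd bsr : R) :
  0 <= bsd -> 0 < brd -> 0 < bsr ->
  liminf_sup_ratio_ge
    (fun SNR v => NNC_det_vals (gainS SNR bsd) (gainI SNR brd) (gainC SNR bsr) v)
    (gdof bsd brd bsr).
Proof.
  intros Hb _ _ eps Heps.
  destruct (frac0_time_split (pos_part (brd - bsd)) (pos_part (bsr - bsd))
              (pos_part_ge0 _) (pos_part_ge0 _)) as [g [Hg [Hfa Hfc]]].
  destruct (eventually_ratio_ge (gdof bsd brd bsr) eps (gdof_nonneg _ _ _ Hb) Heps)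
    as [M HM].
  exists M. intros x Hx. destruct (HM x Hx) as [Hx1 Hratio].
  exists (NNC_det_obj (gainS x bsd) (gainI x brd) (gainC x bsr) g g 1).
  split.
  - exists g, g, 1. repeat split; lra.
  - apply Hratio, (NNC_det_obj_lower_bound x bsd brd bsr g); assumption.
Qed.
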